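(* If $M$ is a restricted Kripke model, $U$ is an atemporal action model over $L_{\mathsf{YDEL}}$, and $W^{M\oplus U}\neq\emptyset$, then $M\oplus U$ is a restricted Kripke model.
   Context: Fix a nonempty finite set $\mathsf{Agt}$ of agents and a nonempty set $\mathsf{Prop}$ of letters. A Kripke model is $M=(W^M,(\to^M_a)_a,\leadsto^M,V^M)$: nonempty $W^M$, binary relations $\to^M_a,\leadsto^M$ ($w'\leadsto w$: $w'$ is a yesterday of $w$), valuation $V^M:\mathsf{Prop}\to\mathcal P(W^M)$. A progression is a finite nonempty $x_0,\dots,x_n$ with $x_i\leadsto x_{i+1}$; a history is one not extendable at its beginning; $\mathrm{depth}(x)$ is the maximal length of a history ending at $x$ ($\infty$ if none). $M$ is restricted if: $w\leadsto w'$ implies $w\in V(p)\iff w'\in V(p)$ (persistence of facts); all depths finite; $w'\leadsto w\to_av$ implies $\exists v'\leadsto v$ (knowledge of the past); $w\to_av$ and no $w'\leadsto w$ imply no $v'\leadsto v$ (knowledge of initial time); $w'\leadsto w$, $w''\leadsto w$ imply $w'=w''$ (uniqueness of the past); $w\leadsto v\to_av'$ implies $\exists w'$ with $w\to_aw'\leadsto v'$ (perfect recall). An action model over a set of formulas $F$ is $U=(W^U,(\to^U_a)_a,\leadsto^U,\mathrm{pre}^U)$ with $W^U$ nonempty finite, binary relations, $\mathrm{pre}^U:W^U\to F$; atemporal means $\leadsto^U=\emptyset$. $L_{\mathsf{YDEL}}$: $\varphi::=p\mid\neg\varphi\mid\varphi\wedge\varphi\mid\Box_a\varphi\mid[Y]\varphi\mid[U,s]\varphi$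 with $(U,s)$ a pointed atemporal action model over $L_{\mathsf{YDEL}}$; the symbol $\flat$ is never a world or event. $\mathsf{YDEL}$ semantics on pointed restricted models: Boolean standard; $M,w\models_{\mathsf{YDEL}}\Box_a\varphi$ iff $\varphi$ holds at all $v$ with $w\to^M_av$; $M,w\models_{\mathsf{YDEL}}[Y]\varphi$ iff $\varphi$ holds at all $v\leadsto^Mw$; $M,w\models_{\mathsf{YDEL}}[U,s]\varphi$ iff $M,w\models_{\mathsf{YDEL}}\mathrm{pre}^U(s)$ implies $M\oplus U,(w,s)\models_{\mathsf{YDEL}}\varphi$, where $W^{M\oplus U}=(W^M\times\{\flat\})\cup\{(v,t)\in W^M\times W^U:M,v\models_{\mathsf{YDEL}}\mathrm{pre}^U(t)\}$; $(v,t)\to_a(v',t')$ iff ($t,t'\ne\flat$, $v\to^M_av'$, $t\to^U_at'$) or ($t=t'=\flat$, $v\to^M_av'$); $(v,t)\leadsto(v',t')$ iff ($t=\flat$, $t'\ne\flat$, $v=v'$) or ($t=t'=\flat$, $v\leadsto^Mv'$); $(v,t)\in V(p)$ iff $v\in V^M(p)$. *)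

From mathcomp Require Import all_boot.
Set Implicit Arguments. Unset Strict Implicit. Unset Printing Implicit Defensive.

Section YDEL.
Variable Agt : finType.
Variable Prp : Type.

(* Kripke structure over a carrier W (nonemptiness is part of [restricted]). *)
Record model (W : Type) := Model {
  mrel  : Agt -> W -> W -> Prop;
  myest : W -> W -> Prop;            (* w' ~> w : w' is a yesterday of w *)
  mval  : Prp -> W -> Prop
}.

(* Formulas of L_YDEL.  An action-model modality [U,s] carries the
   (atemporal) action model unpacked: events 'I_n.+1 (nonempty finite),
   relations ->_a, preconditions, and the point s. *)
Inductive form : Type :=
| FVar : Prp -> form
| FNeg : form -> form
| FAnd : form -> form -> form
| FBox : Agt -> form -> form
| FY   : form -> form
| FAct : forall n : nat, (Agt -> 'I_n.+1 -> 'I_n.+1 -> Prop) ->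
           ('I_n.+1 -> form) -> 'I_n.+1 -> form -> form.

(* Worlds of the product M (+) U; [None] plays the role of the symbol flat. *)
Definition prodW (W : Type) (n : nat) (ok : W -> 'I_n.+1 -> Prop) :=
  {x : W * option 'I_n.+1 | if x.2 is Some t then ok x.1 t else True}.

Definition prodM (W : Type) (M : model W) (n : nat)
  (arel : Agt -> 'I_n.+1 -> 'I_n.+1 -> Prop) (ok : W -> 'I_n.+1 -> Prop)
  : model (prodW ok) :=
  Model
    (fun a (x y : prodW ok) =>
       match (sval x).2, (sval y).2 with
       | Some t, Some t' => mrel M a (sval x).1 (sval y).1 /\ arel a t t'
       | None, None => mrel M a (sval x).1 (sval y).1
       | _, _ => False
       end)
    (fun (x y : prodW ok) =>
       ((sval x).2 = None /\ (sval y).2 <> None /\ (sval x).1 = (sval y).1)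
       \/ ((sval x).2 = None /\ (sval y).2 = None /\ myest M (sval x).1 (sval y).1))
    (fun p (x : prodW ok) => mval M p (sval x).1).

Fixpoint sat (phi : form) : forall (W : Type), model W -> W -> Prop :=
  match phi with
  | FVar p => fun W M w => mval M p w
  | FNeg f => fun W M w => ~ sat f M w
  | FAnd f g => fun W M w => sat f M w /\ sat g M w
  | FBox a f => fun W M w => forall v, mrel M a w v -> sat f M v
  | FY f => fun W M w => forall v, myest M v w -> sat f M v
  | FAct n arel pre s f => fun W M w =>
      forall h : sat (pre s) M w,
        sat f (prodM M arel (fun v t => sat (pre t) M v))
              (exist (fun x : W * option 'I_n.+1 =>
                        if x.2 is Some t then sat (pre t) M x.1 else True)
                     (w, Some s) h)
  end.

(* Action models over L_YDEL (with a temporal relation, so that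
   "atemporal" is a genuine hypothesis). *)
Record amodel := AModel {
  an : nat;
  arel : Agt -> 'I_an.+1 -> 'I_an.+1 -> Prop;
  ayest : 'I_an.+1 -> 'I_an.+1 -> Prop;
  apre : 'I_an.+1 -> form
}.

Definition atemporal (U : amodel) : Prop := forall s t, ~ @ayest U s t.

Definition updW (W : Type) (M : model W) (U : amodel) : Type :=
  prodW (fun v t => sat (@apre U t) M v).
Definition upd (W : Type) (M : model W) (U : amodel) : model (updW M U) :=
  prodM M (@arel U) (fun v t => sat (@apre U t) M v).

(* Progressions x_0,...,x_n encoded as f : nat -> W on indices 0..n. *)
Definition progression (W : Type) (M : model W) (f : nat -> W) (n : nat) : Prop :=
  forall i, i < n -> myest M (f i) (f i.+1).
Definition history (W : Type) (M : model W) (f : nat -> W) (n : nat) : Prop :=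
  progression M f n /\ ~ (exists y, myest M y (f 0)).
(* depth(x) is finite iff the lengths of the histories ending at x have a maximum *)
Definition finite_depth (W : Type) (M : model W) (x : W) : Prop :=
  exists N, (exists f, history M f N /\ f N = x) /\
            (forall f n, history M f n -> f n = x -> n <= N).

Definition restricted (W : Type) (M : model W) : Prop :=
  inhabited W /\
  (forall w w' p, myest M w w' -> (mval M p w <-> mval M p w')) /\
  (forall x, finite_depth M x) /\
  (forall w' w a v, myest M w' w -> mrel M a w v -> exists v', myest M v' v) /\
  (forall w a v, mrel M a w v -> (~ exists w', myest M w' w) ->
                  ~ exists v', myest M v' v) /\
  (forall w' w'' w, myest M w' w -> myest M w'' w -> w' = w'') /\
  (forall w v a v', myest M w v -> mrel M a v v' ->
                     exists w', mrel M a w w' /\ myest M w' v').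

End YDEL.

From Stdlib Require Import ProofIrrelevance.
From mathcomp Require Import all_boot.
Set Implicit Arguments. Unset Strict Implicit.

(* A world of M (+) U is either a flat copy (v, b) of a world v of M, whose
   past is the past of v in M lifted to flat copies, or an event (v, t), whose
   only yesterday is (v, b); so depth (v, b) = depth v and depth (v, t) =
   depth v + 1.  Since the relations ->_a never link a flat copy to an event,
   every other clause of restrictedness is checked separately on flat copies,
   where it is the clause for M, and on events, where it holds trivially. *)

Section Histories.
Variables (Agt : finType) (Prp W : Type) (M : model Agt Prp W).

Lemma history_prefix f m n : m <= n -> history M f n -> history M f m.
Proof.
by move=> le_mn [hf h0]; split=> // i lt_im; apply: hf (leq_trans lt_im le_mn).
Qed.

Lemma history_snoc f n y : history M f n -> myest M (f n) y ->
  history M (fun i => if i <= n then f i else y) n.+1.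
Proof.
move=> [hf h0] fy; split=> // i; rewrite ltnS => le_in; rewrite le_in.
case: ltnP => [lt_in|le_ni]; first exact: hf.
by have /eqP -> : i == n by rewrite eqn_leq le_in le_ni.
Qed.

End Histories.

Section ProductModel.
Variables (Agt : finType) (Prp W : Type) (M : model Agt Prp W).
Variables (n : nat) (arel : Agt -> 'I_n.+1 -> 'I_n.+1 -> Prop).
Variable ok : W -> 'I_n.+1 -> Prop.

Local Notation X := (prodW ok).
Local Notation P := (prodM M arel ok).

Definition flat (v : W) : X :=
  exist (fun x : W * option 'I_n.+1 => if x.2 is Some t then ok x.1 t else True)
        (v, None) I.

Definition is_flat (x : X) : Prop := exists v, x = flat v.
Definition is_event (x : X) : Prop := (sval x).2 <> None.

Lemma prodW_eq (x y : X) : sval x = sval y -> x = y.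
Proof. by apply: eq_sig_hprop => ? ? ?; apply: proof_irrelevance. Qed.

Lemma flatVevent x : is_flat x \/ is_event x.
Proof.
case ex: (sval x).2 => [t|]; [by right; rewrite /is_event ex | left].
by exists (sval x).1; apply: prodW_eq; rewrite /= -ex; case: (sval x).
Qed.

Lemma yest_src_flat y x : myest P y x -> is_flat y.
Proof.
have [//|ey] := flatVevent y.
by case=> -[ny _]; case: ey.
Qed.

Lemma flat_yestE v w : myest P (flat v) (flat w) <-> myest M v w.
Proof. by split=> [[[_ []]|[_ []]] | hvw] //; right. Qed.

Lemma event_yestE x y : is_event x -> myest P y x <-> y = flat (sval x).1.
Proof.
move=> ex; split=> [hyx|->]; last by left.
have [v ev] := yest_src_flat hyx; subst y.
by case: hyx => [[_ [_ /= ->]] | [_ [/ex]]].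
Qed.

Lemma rel_fst a x y : mrel P a x y -> mrel M a (sval x).1 (sval y).1.
Proof. by rewrite /=; case: (sval x).2; case: (sval y).2 => // ? ? []. Qed.

Lemma rel_event a x y : mrel P a x y -> (is_event x <-> is_event y).
Proof. by rewrite /is_event /=; case: (sval x).2; case: (sval y).2. Qed.

Lemma rel_flat a x y : mrel P a x y -> is_flat x -> is_flat y.
Proof.
move=> hxy [v ev]; have [//|ey] := flatVevent y.
by move/(rel_event hxy): ey; rewrite ev => /(_ erefl).
Qed.

Lemma rel_flat_inv a x y : mrel P a x y -> is_flat y -> is_flat x.
Proof.
move=> hxy [v ev]; have [//|ex] := flatVevent x.
by move/(rel_event hxy): ex; rewrite ev => /(_ erefl).
Qed.

Lemma history_flat g N : history M g N -> history P (fun i => flat (g i)) N.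
Proof.
move=> [hg h0]; split=> [i /hg /flat_yestE //|[y hy]].
have [v ey] := yest_src_flat hy; rewrite ey in hy.
by apply: h0; exists v; apply/flat_yestE.
Qed.

Lemma history_flat_end f N : history P f N -> is_flat (f N) ->
  history M (fun i => (sval (f i)).1) N.
Proof.
move=> [hf h0] fN.
have flat_f i : i <= N -> is_flat (f i).
  rewrite leq_eqVlt => /orP[/eqP -> // | /hf]; exact: yest_src_flat.
split=> [i lt_iN | [y hy]].
  have [[v ev] [w ew]] := (flat_f i (ltnW lt_iN), flat_f i.+1 lt_iN).
  by move: (hf i lt_iN); rewrite ev ew => /flat_yestE.
have [v ev] := flat_f 0 (leq0n N); rewrite ev in hy.
by apply: h0; exists (flat y); rewrite ev; apply/flat_yestE.
Qed.

Lemma finite_depth_flat v : finite_depth M v -> finite_depth P (flat v).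
Proof.
move=> [N [[g [hg gN]] depth_le]]; exists N; split.
  by exists (fun i => flat (g i)); rewrite gN; split=> //; apply: history_flat.
move=> f m hf fm; apply: depth_le (history_flat_end hf _) _.
  by exists v.
by rewrite fm.
Qed.

Lemma finite_depth_event x : is_event x -> finite_depth M (sval x).1 ->
  finite_depth P x.
Proof.
move=> ex [N [[g [hg gN]] depth_le]]; exists N.+1; split.
  exists (fun i => if i <= N then flat (g i) else x); rewrite ltnn; split=> //.
  by apply: history_snoc (history_flat hg) _; rewrite gN; apply/event_yestE.
move=> f [|k] hf fk.
  by case: hf.2; exists (flat (sval x).1); rewrite fk; apply/event_yestE.
have /(event_yestE _ ex) fk' : myest P (f k) x by rewrite -fk; apply: hf.1.
have hk := history_flat_end (history_prefix (leqnSn k) hf) (ex_intro _ _ fk').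
by apply: depth_le hk _; rewrite fk'.
Qed.

Hypothesis restrictedM : restricted M.

Lemma prod_restricted : restricted P.
Proof.
have [[w] [pers [depth [past [initial [unique recall]]]]]] := restrictedM.
split; first exact: inhabits (flat w).
split=> [y x p /= [[_ [_ ->]] | [_ [_ /pers]]] // | ].
split=> [x | ].
  have [[v ->]|ex] := flatVevent x; first exact: finite_depth_flat.
  exact: finite_depth_event.
split=> [w' x a y hw'x hxy | ].
  have [[v ev]|ey] := flatVevent y.
    have [u eu] := rel_flat_inv hxy (ex_intro _ _ ev).
    have [u' eu'] := yest_src_flat hw'x.
    move: hw'x hxy; rewrite eu eu' ev => /flat_yestE hu'u huv.
    by have [v' hv'v] := past _ _ _ _ hu'u huv; exists (flat v'); apply/flat_yestE.
  by exists (flat (sval y).1); apply/event_yestE.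
split=> [x a y hxy no_yx [y' hy'y] | ].
  have [[u eu]|ex] := flatVevent x; last first.
    by apply: no_yx; exists (flat (sval x).1); apply/event_yestE.
  have [v ev] := rel_flat hxy (ex_intro _ _ eu).
  have [v' ev'] := yest_src_flat hy'y.
  move: hxy hy'y; rewrite eu ev ev' => huv /flat_yestE hv'v.
  apply: initial huv _ (ex_intro _ v' hv'v) => -[u' hu'u].
  by apply: no_yx; exists (flat u'); rewrite eu; apply/flat_yestE.
split=> [y1 y2 x hy1 hy2 | ].
  have [[v ev]|ex] := flatVevent x; last first.
    by move: hy1 hy2 => /(event_yestE _ ex) -> /(event_yestE _ ex) ->.
  have [[u1 e1] [u2 e2]] := (yest_src_flat hy1, yest_src_flat hy2).
  move: hy1 hy2; rewrite ev e1 e2 => /flat_yestE hu1 /flat_yestE hu2.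
  by rewrite (unique _ _ _ hu1 hu2).
move=> x y a y' hxy hyy'.
have [[v ev]|ey] := flatVevent y.
  have [v' ev'] := rel_flat hyy' (ex_intro _ _ ev).
  have [u eu] := yest_src_flat hxy.
  move: hxy hyy'; rewrite eu ev ev' => /flat_yestE huv hvv'.
  have [u' [huu' hu'v']] := recall _ _ _ _ huv hvv'.
  by exists (flat u'); split=> //; apply/flat_yestE.
have ey' : is_event y' := (rel_event hyy').1 ey.
exists (flat (sval y').1); split; last exact/event_yestE.
by move/(event_yestE _ ey): hxy => ->; exact: rel_fst hyy'.
Qed.

End ProductModel.

Theorem corollary32 (Agt : finType) (Prp : Type)
  (hAgt : inhabited Agt) (hPrp : inhabited Prp)
  (W : Type) (M : model Agt Prp W) (U : amodel Agt Prp) :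
  restricted M -> atemporal U -> inhabited (updW M U) ->
  restricted (upd M U).
Proof.
(* [upd] never consults the temporal relation of U. *)
by move=> hM _ _; apply: prod_restricted.
Qed.
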